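(* Let $n\in\mathbb{N}$, $n\geq 2$, let $l\in(0,\frac{2}{n})$ and let $\alpha$ satisfy $\frac{2}{n}\leq\alpha<1+\frac{1}{n}-\frac{l}{2}$. Let $\theta$ with $1<\theta<\frac{n}{n-2}$ and $\mu>\frac{n}{2}$ be such that $$\frac{l(2\mu-1)}{4\mu-n}<\frac{n(\theta+1-2\alpha\theta)+2\theta}{2n\theta+n^2-n^2\theta},$$ and let $\theta'=\frac{\theta}{\theta-1}$, $\mu'=\frac{\mu}{\mu-1}$ be the conjugate exponents. Then there exist $p\in[1,\infty)$ and $q\in[1,\infty)$ such that the numbers $$a_1=\frac{\frac{np}{2}\big(1-\frac{1}{(p+2\alpha-2)\theta}\big)}{1-\frac n2+\frac{np}{2}},\quad a_2=\frac{nq\big(\frac1n-\frac{1}{2\theta'}\big)}{1-\frac n2+q},\quad a_3=\frac{\frac{np}{2l}\big(1-\frac{1}{2\mu}\big)}{1-\frac n2+\frac{np}{2l}},$$ $$a_4=\frac{nq\big(\frac1n-\frac{1}{2(q-1)\mu'}\big)}{1-\frac n2+q},\quad \kappa_1=\frac{\frac{np}{2}\big(1-\frac1p\big)}{1-\frac n2+\frac{np}{2}},\quad \kappa_2=\frac{q-\frac n2}{1-\frac n2+q}$$ all belong to $(0,1)$, and moreover $$\frac{p-2+2\alpha}{p}a_1+\frac1q a_2\in(0,1)\quad\text{and}\quad \frac{2l}{p}a_3+\frac{q-1}{q}a_4\in(0,1).$$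
   Context: For $n=2$ the condition $1<\theta<\frac{n}{n-2}$ is understood as $\theta>1$. *)

From Stdlib Require Export Reals Lra Lia.
Open Scope R_scope.

Definition in01 (x : R) : Prop := 0 < x < 1.

Definition conj_exp (s : R) : R := s / (s - 1).

Section Exps.
Variables (n : nat) (l alpha theta mu p q : R).
Let N := INR n.

Definition a1 : R :=
  (N * p / 2 * (1 - 1 / ((p + 2 * alpha - 2) * theta))) / (1 - N / 2 + N * p / 2).
Definition a2 : R :=
  (N * q * (1 / N - 1 / (2 * conj_exp theta))) / (1 - N / 2 + q).
Definition a3 : R :=
  (N * p / (2 * l) * (1 - 1 / (2 * mu))) / (1 - N / 2 + N * p / (2 * l)).
Definition a4 : R :=
  (N * q * (1 / N - 1 / (2 * (q - 1) * conj_exp mu))) / (1 - N / 2 + q).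
Definition kappa1 : R :=
  (N * p / 2 * (1 - 1 / p)) / (1 - N / 2 + N * p / 2).
Definition kappa2 : R :=
  (q - N / 2) / (1 - N / 2 + q).
End Exps.

From Stdlib Require Import Reals Lra Lia.
Open Scope R_scope.

(* Put D1 = 1 - n/2 + np/2, D2 = 1 - n/2 + q, K = n - (n-2)θ,
   E = n(θ+1-2αθ) + 2θ, L = nl(2μ-1) and F = 4μ - n.  After clearing
   denominators, the distances of each of a1, ..., a4, κ1, κ2 to 0 and to 1
   are products of factors affine in p or in q with positive slopes, so all six
   lie in (0,1) once p and q are large.  The two combinations are exactly
     1 - (E D2 - K D1) / (2θ D1 D2)   and   1 - (F D3 - 2 L D2) / (2μ D2 D3)
   with D3 = np + 2l(1 - n/2) >= 2 D1, so they stay below 1 as soon as the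
   ratio s = D2/D1 satisfies K < sE and Ls < F.  The hypothesis on l, μ, θ is
   K L < E F, which provides such an s; then take p large and q with D2 = s D1. *)

Lemma in01_div x y : 0 < x -> x < y -> in01 (x / y).
Proof.
  intros Hx Hxy. split.
  - apply Rdiv_lt_0_compat; lra.
  - apply (Rmult_lt_reg_r y); [lra |].
    unfold Rdiv. rewrite Rmult_assoc, Rinv_l by lra. lra.
Qed.

Lemma Rdiv_lt_cross a b c d : 0 < b -> 0 < d -> a / b < c / d -> a * d < c * b.
Proof.
  intros Hb Hd H.
  apply Rmult_lt_compat_r with (r := b * d) in H; [| nra].
  replace (a / b * (b * d)) with (a * d) in H by (field; lra).
  replace (c / d * (b * d)) with (c * b) in H by (field; lra).
  exact H.
Qed.

Lemma exists_between_ratios K E L F :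
  0 < K -> 0 < L -> 0 < F -> K * L < E * F ->
  exists s, 0 < s /\ K < s * E /\ L * s < F.
Proof.
  intros HK HL HF HKL.
  assert (HE : 0 < E) by nra.
  assert (Hratio : K / E < F / L).
  { apply (Rmult_lt_reg_r (E * L)); [nra |].
    replace (K / E * (E * L)) with (K * L) by (field; lra).
    replace (F / L * (E * L)) with (E * F) by (field; lra). exact HKL. }
  assert (HKE : K / E * E = K) by (field; lra).
  assert (HFL : F / L * L = F) by (field; lra).
  assert (HKE0 : 0 < K / E) by (apply Rdiv_lt_0_compat; lra).
  exists ((K / E + F / L) / 2). repeat split; nra.
Qed.

Definition eventually (P : R -> Prop) : Prop := exists T, forall t, T <= t -> P t.

Lemma eventually_and (P Q : R -> Prop) :
  eventually P -> eventually Q -> eventually (fun t => P t /\ Q t).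
Proof.
  intros [T1 H1] [T2 H2]. exists (Rmax T1 T2). intros t Ht. split.
  - apply H1. apply Rle_trans with (Rmax T1 T2); [apply Rmax_l | exact Ht].
  - apply H2. apply Rle_trans with (Rmax T1 T2); [apply Rmax_r | exact Ht].
Qed.

Lemma eventually_mono (P Q : R -> Prop) :
  (forall t, P t -> Q t) -> eventually P -> eventually Q.
Proof. intros HPQ [T H]. exists T. auto. Qed.

Lemma eventually_gt c : eventually (fun t => c < t).
Proof. exists (c + 1). intros t Ht. lra. Qed.

Lemma eventually_affine_pos a b : 0 < a -> eventually (fun t => 0 < a * t + b).
Proof.
  intros Ha. exists ((Rabs b + 1) / a). intros t Ht.
  assert (Hbound : Rabs b + 1 <= a * t).
  { replace (Rabs b + 1) with (a * ((Rabs b + 1) / a)) by (field; lra).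
    apply Rmult_le_compat_l; lra. }
  pose proof (Rle_abs (- b)) as Hb. rewrite Rabs_Ropp in Hb. lra.
Qed.

Lemma eventually_comp_affine (P : R -> Prop) a b :
  0 < a -> eventually P -> eventually (fun t => P (a * t + b)).
Proof.
  intros Ha [T H]. exists ((T - b) / a). intros t Ht. apply H.
  replace T with (a * ((T - b) / a) + b) by (field; lra).
  apply Rplus_le_compat_r, Rmult_le_compat_l; lra.
Qed.

Lemma a1_in01_eventually n alpha theta :
  0 < INR n -> 0 < theta -> (INR n - 2) * theta < INR n ->
  eventually (fun p => in01 (a1 n alpha theta p)).
Proof.
  intros HN Hth HK. set (N := INR n) in *.
  assert (Hslope : 0 < N / 2 + theta * (1 - N / 2)) by nra.
  apply (eventually_mono (fun p =>
    1 < p /\ 0 < theta * p + ((2 * alpha - 2) * theta - 1) /\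
    0 < (N / 2 + theta * (1 - N / 2)) * p + (2 * alpha - 2) * theta * (1 - N / 2))).
  2: { repeat apply eventually_and;
       [apply eventually_gt | apply eventually_affine_pos; lra ..]. }
  intros p [Hp [Hu Hgap]].
  set (u := (p + 2 * alpha - 2) * theta).
  unfold a1. fold N. fold u.
  replace (N * p / 2 * (1 - 1 / u) / (1 - N / 2 + N * p / 2))
    with (N * p * (u - 1) / (2 * u * (1 - N / 2 + N * p / 2)))
    by (field; unfold u; split; nra).
  apply in01_div.
  - apply Rmult_lt_0_compat; [nra | unfold u; nra].
  - unfold u. nra.
Qed.

Lemma a2_in01_eventually n theta :
  0 < INR n -> 1 < theta -> (INR n - 2) * theta < INR n ->
  eventually (fun q => in01 (a2 n theta q)).
Proof.
  intros HN Hth HK. set (N := INR n) in *.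
  apply (eventually_mono (fun q =>
    N / 2 < q /\ 0 < N * (theta - 1) * q + 2 * theta * (1 - N / 2))).
  2: { apply eventually_and; [apply eventually_gt | apply eventually_affine_pos; nra]. }
  intros q [Hq Hgap].
  unfold a2, conj_exp. fold N.
  replace (N * q * (1 / N - 1 / (2 * (theta / (theta - 1)))) / (1 - N / 2 + q))
    with (q * (N - (N - 2) * theta) / (2 * theta * (1 - N / 2 + q)))
    by (field; repeat split; lra).
  apply in01_div; nra.
Qed.

Lemma a3_in01_eventually n l mu :
  0 < INR n -> 0 < l -> 1 < 2 * mu ->
  eventually (fun p => in01 (a3 n l mu p)).
Proof.
  intros HN Hl Hmu. set (N := INR n) in *.
  apply (eventually_mono (fun p =>
    0 < p /\ 0 < N * p + 2 * l * (1 - N / 2) /\ 0 < N * p + 4 * mu * l * (1 - N / 2))).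
  2: { repeat apply eventually_and;
       [apply eventually_gt | apply eventually_affine_pos; lra ..]. }
  intros p [Hp [HD Hgap]].
  unfold a3. fold N.
  replace (N * p / (2 * l) * (1 - 1 / (2 * mu)) / (1 - N / 2 + N * p / (2 * l)))
    with (N * p * (2 * mu - 1) / (2 * mu * (N * p + 2 * l * (1 - N / 2))))
    by (field; repeat split; lra).
  apply in01_div.
  - apply Rmult_lt_0_compat; [nra | lra].
  - nra.
Qed.

Lemma a4_in01_eventually n mu :
  0 < INR n -> 1 < mu -> INR n < 2 * mu ->
  eventually (fun q => in01 (a4 n mu q)).
Proof.
  intros HN Hmu HNmu. set (N := INR n) in *.
  apply (eventually_mono (fun q =>
    N / 2 < q /\ 1 < q /\ 0 < 2 * mu * q + (- 2 * mu - N * (mu - 1)) /\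
    0 < (2 * mu - N) * q + mu * (N - 2))).
  2: { repeat apply eventually_and;
       [apply eventually_gt | apply eventually_gt | apply eventually_affine_pos; lra ..]. }
  intros q [HqN [Hq [Hnum Hgap]]].
  unfold a4, conj_exp. fold N.
  replace (N * q * (1 / N - 1 / (2 * (q - 1) * (mu / (mu - 1)))) / (1 - N / 2 + q))
    with (q * (2 * (q - 1) * mu - N * (mu - 1)) / (2 * (q - 1) * mu * (1 - N / 2 + q)))
    by (field; repeat split; lra).
  apply in01_div; nra.
Qed.

Lemma kappa1_in01 n p : 0 < INR n -> 1 < p -> in01 (kappa1 n p).
Proof.
  intros HN Hp. unfold kappa1.
  replace (INR n * p / 2 * (1 - 1 / p) / (1 - INR n / 2 + INR n * p / 2))
    with (INR n * (p - 1) / (2 + INR n * (p - 1))) by (field; nra).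
  apply in01_div; nra.
Qed.

Lemma kappa2_in01 n q : INR n / 2 < q -> in01 (kappa2 n q).
Proof. intros Hq. apply in01_div; lra. Qed.

Lemma a1_a2_combination_in01 n alpha theta p q :
  0 < INR n -> 1 < theta -> 0 < p -> 0 < p - 2 + 2 * alpha -> 0 < q ->
  0 < 1 - INR n / 2 + INR n * p / 2 -> 0 < 1 - INR n / 2 + q ->
  in01 (a1 n alpha theta p) -> in01 (a2 n theta q) ->
  (INR n - (INR n - 2) * theta) * (1 - INR n / 2 + INR n * p / 2) <
    (INR n * (theta + 1 - 2 * alpha * theta) + 2 * theta) * (1 - INR n / 2 + q) ->
  in01 ((p - 2 + 2 * alpha) / p * a1 n alpha theta p + 1 / q * a2 n theta q).
Proof.
  intros HN Hth Hp Hpa Hq HD1 HD2 [Ha1 _] [Ha2 _] Hratio.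
  split.
  - apply Rplus_lt_0_compat; apply Rmult_lt_0_compat; trivial;
      apply Rdiv_lt_0_compat; lra.
  - set (N := INR n) in *.
    set (K := N - (N - 2) * theta) in *.
    set (E := N * (theta + 1 - 2 * alpha * theta) + 2 * theta) in *.
    set (D1 := 1 - N / 2 + N * p / 2) in *.
    set (D2 := 1 - N / 2 + q) in *.
    assert (Hcomb : (p - 2 + 2 * alpha) / p * a1 n alpha theta p + 1 / q * a2 n theta q
                    = 1 + (K * D1 - E * D2) / (2 * theta * D1 * D2)).
    { unfold a1, a2, conj_exp. fold N. unfold K, E, D1, D2 in *.
      field. repeat split; lra. }
    rewrite Hcomb.
    assert ((K * D1 - E * D2) / (2 * theta * D1 * D2) < 0).
    { apply Rdiv_neg_pos; [lra |].
      apply Rmult_lt_0_compat; [apply Rmult_lt_0_compat |]; lra. }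
    lra.
Qed.

Lemma a3_a4_combination_in01 n l mu p q :
  2 <= INR n -> 0 < l <= 1 -> INR n / 2 < mu -> 0 < p -> 1 < q ->
  0 < 1 - INR n / 2 + INR n * p / 2 -> 0 < 1 - INR n / 2 + q ->
  in01 (a3 n l mu p) -> in01 (a4 n mu q) ->
  INR n * l * (2 * mu - 1) * (1 - INR n / 2 + q) <
    (4 * mu - INR n) * (1 - INR n / 2 + INR n * p / 2) ->
  in01 (2 * l / p * a3 n l mu p + (q - 1) / q * a4 n mu q).
Proof.
  intros HN [Hl0 Hl1] Hmu Hp Hq HD1 HD2 [Ha3 _] [Ha4 _] Hratio.
  split.
  - apply Rplus_lt_0_compat; apply Rmult_lt_0_compat; trivial;
      apply Rdiv_lt_0_compat; lra.
  - set (N := INR n) in *.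
    set (L := N * l * (2 * mu - 1)) in *.
    set (F := 4 * mu - N) in *.
    set (D1 := 1 - N / 2 + N * p / 2) in *.
    set (D2 := 1 - N / 2 + q) in *.
    set (D3 := N * p + 2 * l * (1 - N / 2)).
    assert (HD13 : 2 * D1 <= D3) by (unfold D1, D3; nra).
    assert (Hcomb : 2 * l / p * a3 n l mu p + (q - 1) / q * a4 n mu q
                    = 1 + (2 * L * D2 - F * D3) / (2 * mu * D3 * D2)).
    { unfold a3, a4, conj_exp. fold N. unfold L, F, D2, D3 in *.
      field. repeat split; lra. }
    rewrite Hcomb.
    assert ((2 * L * D2 - F * D3) / (2 * mu * D3 * D2) < 0).
    { apply Rdiv_neg_pos; [unfold F in *; nra |].
      apply Rmult_lt_0_compat; [apply Rmult_lt_0_compat |]; lra. }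
    lra.
Qed.

Lemma critical_exponent_mul n theta :
  (2 <= n)%nat -> ((2 < n)%nat -> theta < INR n / (INR n - 2)) ->
  (INR n - 2) * theta < INR n.
Proof.
  intros Hn Hcrit. destruct (Nat.eq_dec n 2) as [-> | Hn2].
  - simpl. lra.
  - assert (H2n : (2 < n)%nat) by lia.
    assert (HN : 2 < INR n) by (apply (lt_INR 2) in H2n; simpl in H2n; lra).
    apply Hcrit, (Rmult_lt_compat_r (INR n - 2)) in H2n; [| lra].
    replace (INR n / (INR n - 2) * (INR n - 2)) with (INR n) in H2n by (field; lra).
    lra.
Qed.

Theorem lemma4p6 (n : nat) (l alpha theta mu : R) :
  (2 <= n)%nat ->
  0 < l < 2 / INR n ->
  2 / INR n <= alpha < 1 + 1 / INR n - l / 2 ->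
  1 < theta ->
  ((2 < n)%nat -> theta < INR n / (INR n - 2)) ->
  INR n / 2 < mu ->
  l * (2 * mu - 1) / (4 * mu - INR n) <
    (INR n * (theta + 1 - 2 * alpha * theta) + 2 * theta) /
    (2 * INR n * theta + INR n ^ 2 - INR n ^ 2 * theta) ->
  exists p q : R, 1 <= p /\ 1 <= q /\
    in01 (a1 n alpha theta p) /\
    in01 (a2 n theta q) /\
    in01 (a3 n l mu p) /\
    in01 (a4 n mu q) /\
    in01 (kappa1 n p) /\
    in01 (kappa2 n q) /\
    in01 ((p - 2 + 2 * alpha) / p * a1 n alpha theta p + 1 / q * a2 n theta q) /\
    in01 (2 * l / p * a3 n l mu p + (q - 1) / q * a4 n mu q).
Proof.
  intros Hn [Hl0 Hl] _ Hth Hcrit Hmu Hkey.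
  pose proof (critical_exponent_mul n theta Hn Hcrit) as HK.
  assert (HN : 2 <= INR n) by (apply (le_INR 2) in Hn; simpl in Hn; lra).
  set (N := INR n) in *.
  assert (Hl1 : l <= 1).
  { apply Rlt_le, (Rlt_le_trans _ (2 / N)); [exact Hl |].
    apply (Rmult_le_reg_r N); [lra |]. unfold Rdiv. rewrite Rmult_assoc, Rinv_l; lra. }
  apply Rdiv_lt_cross in Hkey; [| lra | nra].
  destruct (exists_between_ratios (N - (N - 2) * theta)
              (N * (theta + 1 - 2 * alpha * theta) + 2 * theta)
              (N * l * (2 * mu - 1)) (4 * mu - N)) as [s [Hs [HsE HsF]]];
    [lra | apply Rmult_lt_0_compat; [nra | lra] | lra | nra |].
  pose (q_of p := s * N / 2 * p + (s - 1) * (1 - N / 2)).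
  pose (good_q q := N / 2 + 1 < q /\ in01 (a2 n theta q) /\ in01 (a4 n mu q)).
  assert (Hev : eventually (fun p =>
    (1 < p /\ 2 - 2 * alpha < p /\ in01 (a1 n alpha theta p) /\ in01 (a3 n l mu p)) /\
    good_q (q_of p))).
  { apply eventually_and.
    - apply eventually_and; [apply eventually_gt |].
      apply eventually_and; [apply eventually_gt |].
      apply eventually_and; [apply a1_in01_eventually | apply a3_in01_eventually]; fold N; lra.
    - apply (eventually_comp_affine good_q); [nra |].
      apply eventually_and; [apply eventually_gt |].
      apply eventually_and; [apply a2_in01_eventually | apply a4_in01_eventually]; fold N; lra. }
  destruct Hev as [p Hev].
  destruct (Hev p (Rle_refl p)) as [[Hp1 [Hpa [Ha1 Ha3]]] [Hq [Ha2 Ha4]]].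
  assert (HD1 : 0 < 1 - N / 2 + N * p / 2) by nra.
  assert (HD2 : 1 - N / 2 + q_of p = s * (1 - N / 2 + N * p / 2)) by (unfold q_of; field).
  exists p, (q_of p).
  split; [lra |]. split; [lra |].
  split; [exact Ha1 |]. split; [exact Ha2 |]. split; [exact Ha3 |]. split; [exact Ha4 |].
  split; [apply kappa1_in01; fold N; lra |]. split; [apply kappa2_in01; fold N; lra |].
  split.
  - apply a1_a2_combination_in01; fold N; try assumption; try lra. rewrite HD2. nra.
  - apply a3_a4_combination_in01; fold N; try assumption; try lra. rewrite HD2. nra.
Qed.
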